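(* The classical monodromy operator $h_\ast:\hat H\to\hat H$ and the operator $\mathrm{Var}^{-1}:\hat H\to\hat H^\ast$ satisfy $$h_\ast=(-1)^n\,\mathrm{Var}\,(\mathrm{Var}^{-1})^T,$$ where $\mathrm{Var}:\hat H^\ast\to\hat H$ is the inverse of $\mathrm{Var}^{-1}$ and $(\mathrm{Var}^{-1})^T:\hat H=\hat H^{\ast\ast}\to\hat H^\ast$ is the transpose of $\mathrm{Var}^{-1}$.
   Context: Let $f=(f_1,\dots,f_{p+1}):(\mathbb C^{n+p},0)\to(\mathbb C^{p+1},0)$ be an analytic germ such that $V=\{f_1=\dots=f_{p+1}=0\}$ is an $(n-1)$-dimensional and $V'=\{f_1=\dots=f_p=0\}$ an $n$-dimensional isolated complete intersection singularity. For a small ball $B_\delta$ and suitable small generic $t$ (with $0<|t_1|\ll\dots\ll|t_{p+1}|\ll\delta$), $V_t=\{x\in B_\delta:f_j(x)=t_j,1\le j\le p+1\}$ and $V'_t=\{x\in B_\delta:f_j(x)=t_j,1\le j\le p\}$; $\hat H=H_n(V'_t,V_t)$, $\hat H^\ast=\operatorname{Hom}(\hat H,\mathbb Z)$. The intersection form $\langle\cdot,\cdot\rangle$ on $\hat H$ is the pullback via the boundary map $\hat H\to H_{n-1}(V_t)$ of the intersection form of $V_t$. Let $\tilde f_{p+1}:V'_t\to\mathbb C$ be a generic perturbation of $f_{p+1}|_{V'_t}$ with only nondegenerate critical points, with distinct critical values $z_1,\dots,z_\nu$, and $z_0$ a noncritical value with $|z_0|>|z_j|$. Paths $u_j$ from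 $z_j$ to $z_0$ in the disc $D=\{|z|\le|z_0|\}$, non-self-intersecting, pairwise meeting only at $z_0$, numbered clockwise by order of arrival at $z_0$ starting from $\partial D$, define (up to orientation) thimbles $\hat\delta_j\in\hat H$ forming a distinguished basis; $\{\nabla_j\}$ is the dual basis. $\mathrm{Var}^{-1}:\hat H\to\hat H^\ast$ is defined by $\mathrm{Var}^{-1}(\hat\delta_i)=(-1)^{n(n+1)/2}\nabla_i-\sum_{j<i}\langle\hat\delta_i,\hat\delta_j\rangle\nabla_j$ (independent of the distinguished basis). The classical monodromy $h_\ast:\hat H\to\hat H$ is the automorphism induced by going once counterclockwise around $\partial D$; equivalently $h_\ast=h_{\hat\delta_1}\circ\dots\circ h_{\hat\delta_\nu}$ with $h_{\hat\delta}(y)=y+(-1)^{n(n+1)/2}\langle y,\hat\delta\rangle\hat\delta$. *)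

(* Algebraic (lattice) model of H^ = H_n(V'_t, V_t) in the
   coordinates of a distinguished basis: H^ = Z^nu as column vectors, the
   thimble delta_i being the i-th standard basis vector; H^* = Z^nu with the
   dual basis nabla_j as standard basis. *)
From HB Require Import structures.
From mathcomp Require Import all_boot all_order all_algebra.
Set Implicit Arguments. Unset Strict Implicit. Unset Printing Implicit Defensive.
Import Order.TTheory GRing.Theory Num.Theory.
Local Open Scope ring_scope.

Definition eps (n : nat) : int := (-1) ^+ (n * n.+1 %/ 2).

Definition thimble (nu : nat) (i : 'I_nu) : 'cV[int]_nu := delta_mx i 0.

(* intersection form on H^: <x,y> = x^T B y, where B i j = <delta_i, delta_j>
   (pullback of the intersection form of V_t under the boundary map) *)
Definition iform (nu : nat) (B : 'M[int]_nu) (x y : 'cV[int]_nu) : int :=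
  (x^T *m B *m y) 0 0.

(* Picard--Lefschetz transformation h_delta(y) = y + eps <y,delta> delta,
   as a matrix acting on column vectors *)
Definition PLmx (n nu : nat) (B : 'M[int]_nu) (d : 'cV[int]_nu) : 'M[int]_nu :=
  \matrix_(k < nu, l < nu)
    ((k == l)%:R + eps n * iform B (delta_mx l 0) d * d k 0).

Definition monodromy (n nu : nat) (B : 'M[int]_nu) : 'M[int]_nu :=
  foldr (fun i acc => PLmx n B (thimble i) *m acc) 1%:M (enum 'I_nu).

(* Var^{-1} : H^ -> H^*, Var^{-1}(delta_i) = eps nabla_i - sum_{j<i} <delta_i,delta_j> nabla_j;
   column i of the matrix holds the coordinates of Var^{-1}(delta_i). *)
Definition VarInv (n nu : nat) (B : 'M[int]_nu) : 'M[int]_nu :=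
  \matrix_(j < nu, i < nu)
    (eps n * (j == i)%:R - (j < i)%N%:R * B i j).

Definition Var (n nu : nat) (B : 'M[int]_nu) : 'M[int]_nu := invmx (VarInv n B).

From HB Require Import structures.
From mathcomp Require Import all_boot all_order all_algebra.
From mathcomp Require Import ring.
Import Order.TTheory GRing.Theory Num.Theory.
Local Open Scope ring_scope.

(* With X := eps *: B^T, the Picard-Lefschetz transformation of the i-th thimble
   is the row shear 1 + E_ii X, which only changes row i.  Composing these shears
   in increasing order of i gives the recursion h = 1 + U h + (X - U), where U is
   the strictly upper triangular part of X; that is, (1 - U) h = 1 + X - U.
   As Var^-1 = eps (1 - U) is unitriangular up to sign, this reads
   Var^-1 h = eps + B^T - U(B^T), and the (-1)^(n-1)-symmetry of B together with
   the value of its diagonal identifies the right-hand side with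
   (-1)^n (Var^-1)^T. *)

Section RowShears.

Variables (R : pzRingType) (nu : nat).
Implicit Types (X P : 'M[R]_nu) (s : seq 'I_nu).

Definition rowshear X (m : 'I_nu) : 'M[R]_nu := 1%:M + delta_mx m m *m X.

Definition rowshear_prod X s : 'M[R]_nu :=
  foldr (fun m P => rowshear X m *m P) 1%:M s.

Definition triu_strict X : 'M[R]_nu :=
  \matrix_(i, j) if (i < j)%N then X i j else 0.

Lemma delta_mulmxE m X k l : (delta_mx m m *m X) k l = (k == m)%:R * X m l.
Proof.
rewrite mxE (bigD1 m) //= big1 ?addr0 => [|j /negbTE jm]; last by rewrite mxE jm andbF mul0r.
by rewrite mxE eqxx andbT.
Qed.

Lemma rowshear_mulE X m P k l :
  (rowshear X m *m P) k l = P k l + (k == m)%:R * \sum_j X m j * P j l.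
Proof. by rewrite mulmxDl mul1mx mxE -mulmxA delta_mulmxE [X in _ * X]mxE. Qed.

Lemma rowshear_prodE X s k l : sorted ltn (map val s) ->
  rowshear_prod X s k l = (k == l)%:R + (k \in s)%:R *
    \sum_j X k j * (if (k < j)%N then rowshear_prod X s j l else (j == l)%:R).
Proof.
elim: s k l => [|m s IHs] k l; first by rewrite /= mxE mul0r addr0.
rewrite /= (path_sortedE ltn_trans) all_map => /andP[/allP /= m_lt_s /IHs {}IHs].
have m_notin_s : m \notin s by apply/negP => /m_lt_s; rewrite /= ltnn.
set P := rowshear_prod X s.
have outside_s j : j \notin s -> P j l = (j == l)%:R.
  by move/negbTE => js; rewrite IHs js mul0r addr0.
have off_m j : j != m -> (rowshear X m *m P) j l = P j l.
  by move/negbTE => jm; rewrite rowshear_mulE jm mul0r addr0.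
rewrite in_cons; case: (eqVneq k m) => [-> | km] /=.
  rewrite rowshear_mulE eqxx outside_s // !mul1r; congr (_ + _).
  apply: eq_bigr => j _; case: ltnP => [mj | jm]; first by rewrite off_m // neq_ltn mj orbT.
  by rewrite outside_s //; apply: contraTN jm => js; rewrite -ltnNge m_lt_s.
rewrite off_m // IHs; case ks: (k \in s); rewrite ?mul0r //.
congr (_ + _ * _); apply: eq_bigr => j _; case: ifP => // kj.
by rewrite off_m //; apply: contraTneq (m_lt_s _ ks) => jm; rewrite -leqNgt -jm ltnW.
Qed.

Lemma sub_triu_strict_mul_rowshear_prod X :
  (1%:M - triu_strict X) *m rowshear_prod X (enum 'I_nu) = 1%:M + (X - triu_strict X).
Proof.
have sorted_enum : sorted ltn (map val (enum 'I_nu)).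
  by rewrite val_enum_ord iota_ltn_sorted.
apply/matrixP => k l; rewrite mulmxBl mul1mx !mxE rowshear_prodE // mem_enum mul1r.
rewrite -addrA -sumrB; congr (_ + _).
under eq_bigr => j _ do rewrite mxE.
rewrite (bigD1 l) //= big1 ?addr0 => [|j /negbTE jl].
  by case: ifP; rewrite ?subrr ?mul0r ?subr0 ?eqxx ?mulr1.
by case: ifP; rewrite ?subrr // jl mulr0 mul0r subr0.
Qed.

Lemma triu_strictZ (c : R) X : triu_strict (c *: X) = c *: triu_strict X.
Proof. by apply/matrixP => i j; rewrite !mxE; case: ifP; rewrite ?mulr0. Qed.

End RowShears.

Arguments rowshear {R nu}.
Arguments rowshear_prod {R nu}.
Arguments triu_strict {R nu}.

Lemma unitmx_sub_triu_strict (R : comUnitRingType) nu (X : 'M[R]_nu) :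
  1%:M - triu_strict X \in unitmx.
Proof.
have lower : is_trig_mx (1%:M - triu_strict X)^T.
  by apply/is_trig_mxP => i j ij; rewrite !mxE ltnNge (ltnW ij) -val_eqE /= gtn_eqF // subr0.
rewrite -unitmx_tr unitmxE (det_trig lower) rpred_prod // => i _.
by rewrite !mxE eqxx ltnn subr0 unitr1.
Qed.

Lemma scalar_add_tril_eq_tr (R : comRingType) nu (e s : R) (B : 'M[R]_nu) :
  B^T = s *: B -> (forall i, B i i = - e * (1 + s)) ->
  e *: 1%:M + (B^T - triu_strict B^T) = - s *: (e *: 1%:M - triu_strict B^T)^T.
Proof.
move=> symB diagB; apply/matrixP => i l; rewrite !mxE.
have Bli : B l i = s * B i l by have := congr1 (fun M : 'M[R]_nu => M i l) symB; rewrite !mxE.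
rewrite -!val_eqE /=.
case: (ltngtP i l) => [il|li|/val_inj <-]; rewrite ?Bli ?diagB /=; ring.
Qed.

Lemma eps_sqr n : eps n * eps n = 1.
Proof. by rewrite -expr2 sqrr_sign. Qed.

Lemma self_intersection_sign m : (-1) ^+ ((m * m.-1) %/ 2) = - eps m.+1.
Proof.
rewrite /eps; have -> : (m.+1 * m.+2 = m.*2.+1 * 2 + m * m.-1)%N.
  by case: m => [|k] //=; rewrite -addnn; ring.
by rewrite divnMDl // exprD exprS -muln2 exprM sqrr_sign mulr1 mulN1r opprK.
Qed.

Lemma iform_thimble nu (B : 'M[int]_nu) i j : iform B (thimble i) (thimble j) = B i j.
Proof. by rewrite /iform /thimble trmx_delta -rowE -colE !mxE. Qed.

Lemma PLmx_rowshear n nu (B : 'M[int]_nu) m :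
  PLmx n B (thimble m) = rowshear (eps n *: B^T) m.
Proof.
apply/matrixP => k l; rewrite /rowshear [LHS]mxE [RHS]mxE delta_mulmxE iform_thimble.
by rewrite !mxE andbT mulrC.
Qed.

Lemma monodromy_rowshear_prod n nu (B : 'M[int]_nu) :
  monodromy n B = rowshear_prod (eps n *: B^T) (enum 'I_nu).
Proof.
by rewrite /monodromy /rowshear_prod; elim: (enum _) => //= m s ->; rewrite PLmx_rowshear.
Qed.

Lemma VarInvE n nu (B : 'M[int]_nu) : VarInv n B = eps n *: 1%:M - triu_strict B^T.
Proof.
by apply/matrixP => j i; rewrite !mxE; case: ltnP; rewrite ?mul1r ?mul0r.
Qed.

Theorem proposition4 (n nu : nat) (B : 'M[int]_nu) :
  (0 < n)%N ->
  (* the intersection form of the (n-1)-dimensional V_t is (-1)^{n-1}-symmetric *)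
  B^T = (-1) ^+ (n.-1) *: B ->
  (* self-intersection of the vanishing cycle (boundary of a thimble) *)
  (forall i : 'I_nu,
      B i i = (-1) ^+ ((n.-1 * n.-2) %/ 2) * (1 + (-1) ^+ n.-1)) ->
  monodromy n B = ((-1) ^+ n) *: (Var n B *m (VarInv n B)^T).
Proof.
case: n => // m _ /= symB diagB; set e := eps m.+1.
have VarInv_shear : VarInv m.+1 B = e *: (1%:M - triu_strict (e *: B^T)).
  by rewrite VarInvE triu_strictZ scalerBr scalerA eps_sqr scale1r.
have VarInv_monodromy : VarInv m.+1 B *m monodromy m.+1 B = (-1) ^+ m.+1 *: (VarInv m.+1 B)^T.
  rewrite {1}VarInv_shear monodromy_rowshear_prod -scalemxAl.
  rewrite sub_triu_strict_mul_rowshear_prod triu_strictZ -scalerBr scalerDr scalerA eps_sqr scale1r.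
  rewrite VarInvE exprS mulN1r; apply: scalar_add_tril_eq_tr => // i.
  by rewrite diagB self_intersection_sign.
have VarInv_unit : VarInv m.+1 B \in unitmx.
  by rewrite VarInv_shear unitmxZ ?unitmx_sub_triu_strict // -[e]signr_odd; case: odd.
by rewrite /Var scalemxAr -VarInv_monodromy mulKmx.
Qed.
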